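(* Let $n\ge1$ be an integer and let $c_0,g_2,g_3$ be arbitrary constants. Let $C(p)=-n(n+1)p+c_0$ and let $A(p)=\sum_{i=0}^{n}a_ip^i$ be a polynomial with $a_n=1$. Then $A$ satisfies the polynomial identity $$(4p^{3}-g_2p-g_3)A'''(p)+\left(18p^{2}-\tfrac{3g_2}{2}\right)A''(p)+4(3p+C(p))A'(p)+2A(p)C'(p)=0$$ if and only if its coefficients are given by $$a_{n-1}=\frac{c_0}{2n-1},\qquad a_{n-2}=\frac{\left(8c_0^{2}-ng_2(2n-1)^{2}\right)(n-1)}{8(2n-3)(2n-1)^{2}}\ \ (\text{for } n\ge2),$$ and, for $i=n-3,n-4,\ldots,0$, $$a_i=\frac{\left((2i^{2}+10i+12)a_{i+3}g_3+(2i^{2}+7i+6)a_{i+2}g_2-8c_0a_{i+1}\right)(i+1)}{4(i+n+1)(2i+1)(i-n)}.$$ In particular, for all values of $c_0,g_2,g_3$, the function $z(x)=A(\wp(x))$ is a solution of the Lie equation $z'''+4wz'+2w'z=0$ for the potential $w(x)=-n(n+1)\wp(x)+c_0$, where $\wp$ is the Weierstrass function with invariants $g_2,g_3$.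
   Context: The Weierstrass function $\wp(x)$ satisfies $(\wp')^2=4\wp^3-g_2\wp-g_3$ with invariants $g_2,g_3$. For a potential $w(x)=C(\wp(x))$ and a candidate symmetry $z(x)=A(\wp(x))$ with $C,A$ polynomials, substituting into the Lie equation $z'''+4wz'+2w'z=0$ and using the Weierstrass ODE, the Lie equation becomes $\wp'(x)$ times the displayed polynomial expression evaluated at $p=\wp(x)$; so $z$ is a symmetry exactly when the displayed polynomial identity in $p$ holds. *)

From mathcomp Require Import all_boot all_order all_algebra.
Set Implicit Arguments. Unset Strict Implicit. Unset Printing Implicit Defensive.
Import GRing.Theory.
Local Open Scope ring_scope.

Definition Cpot (R : nzRingType) (n : nat) (c0 : R) : {poly R} :=
  - ((n * n.+1)%N%:R *: 'X) + c0%:P.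

Definition lie_poly (R : fieldType) (n : nat) (c0 g2 g3 : R) (A : {poly R})
  : {poly R} :=
  let C := Cpot n c0 in
  (4%:R *: 'X^3 - g2 *: 'X - g3%:P) * A^`(3)
  + (18%:R *: 'X^2 - (3%:R * g2 / 2%:R)%:P) * A^`(2)
  + 4%:R *: ((3%:R *: 'X + C) * A^`())
  + 2%:R *: (A * C^`()).

From mathcomp Require Import all_boot all_order all_algebra ring zify.
Set Implicit Arguments. Unset Strict Implicit. Unset Printing Implicit Defensive.
Import GRing.Theory.
Local Open Scope ring_scope.

(* Twice the coefficient of p^k in the Lie polynomial is [lie_rec n c0 g2 g3 A k],
   a linear combination of a_k, ..., a_(k+3) in which a_k carries the factor
   4 (2k+1) (k-n) (k+n+1).  For k >= n it vanishes once deg A <= n; for k < n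
   that factor is nonzero in characteristic 0, so the k-th equation solves for
   a_k in terms of higher coefficients.  With a_n = 1 and a_(n+1) = a_(n+2) = 0
   this yields the closed forms of a_(n-1) and a_(n-2) and the recurrence for
   the remaining coefficients. *)

Definition lie_rec (R : nzRingType) (n : nat) (c0 g2 g3 : R) (A : {poly R}) (k : nat) : R :=
  4%:R * (2 * k + 1)%N%:R * (k%:R - n%:R) * (k + n + 1)%N%:R * A`_k
  + 8%:R * c0 * k.+1%:R * A`_k.+1
  - g2 * (k.+1 * k.+2 * (2 * k + 3))%N%:R * A`_k.+2
  - 2%:R * g3 * (k.+1 * k.+2 * k.+3)%N%:R * A`_k.+3.

Lemma coef_lie_poly (R : fieldType) n c0 g2 g3 (A : {poly R}) k :
  2%:R != 0 :> R -> 2%:R * (lie_poly n c0 g2 g3 A)`_k = lie_rec n c0 g2 g3 A k.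
Proof.
move=> two_neq0; rewrite /lie_poly /Cpot /lie_rec.
rewrite !derivnS derivn0 !derivD derivN !derivZ derivC derivX addr0.
rewrite !mulrDl !mulNr mulrN mulr_algr -!scalerAl.
rewrite !coefD !coefN !coefZ !coefXnM !coefXM !coefCM !coef_deriv.
rewrite !coefD !coefN !coefZ !coefXM !coefCM !coef_deriv.
by case: k => [|[|[|k]]] /=; rewrite ?subSS ?subn0; field.
Qed.

Lemma lie_rec_ge (R : nzRingType) n c0 g2 g3 (A : {poly R}) k :
  (size A <= n.+1)%N -> (n <= k)%N -> lie_rec n c0 g2 g3 A k = 0.
Proof.
move=> sizeA nk; have A_gt j : (k < j)%N -> A`_j = 0.
  by move=> kj; exact: nth_default (leq_trans sizeA (leq_ltn_trans nk kj)).
rewrite /lie_rec (A_gt k.+3 (ltnW (leqnSn _))) (A_gt k.+2) ?(A_gt k.+1) //.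
rewrite !mulr0 !subr0 addr0.
case: (ltngtP n k) nk => [kn _ | // | <- _]; last by rewrite subrr mulr0 !mul0r.
by rewrite (nth_default _ (leq_trans sizeA kn)) mulr0.
Qed.

Lemma lie_poly_eq0 (R : fieldType) n c0 g2 g3 (A : {poly R}) :
  2%:R != 0 :> R -> (size A <= n.+1)%N ->
  lie_poly n c0 g2 g3 A = 0 <-> forall k, (k < n)%N -> lie_rec n c0 g2 g3 A k = 0.
Proof.
move=> two_neq0 sizeA; split=> [lie0 k _ | rec0].
  by rewrite -coef_lie_poly // lie0 coef0 mulr0.
apply/polyP => k; apply: (mulfI two_neq0); rewrite coef_lie_poly // coef0 mulr0.
by case: (ltnP k n) => [/rec0 | /(lie_rec_ge c0 g2 g3 sizeA)].
Qed.

Lemma eq0_iff_eq_div (R : fieldType) (c d x y z : R) :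
  c != 0 -> d != 0 -> z = c * (d * x - y) -> z = 0 <-> x = y / d.
Proof.
move=> c_neq0 d_neq0 ->; split=> [/eqP | ->].
  by rewrite mulf_eq0 (negbTE c_neq0) subr_eq0 => /eqP <-; rewrite mulrC mulKf.
by rewrite mulrCA divff // mulr1 subrr mulr0.
Qed.

Section LieRecurrence.

Context {R : fieldType} {c0 g2 g3 : R} {A : {poly R}}.
Hypothesis charR0 : [pchar R] =i pred0.

Lemma natr_neq0 m : (0 < m)%N -> m%:R != 0 :> R.
Proof. by move/pcharf0P: charR0 => ->; rewrite -lt0n. Qed.

Lemma natr_sub_neq0 i n : (i < n)%N -> i%:R - n%:R != 0 :> R.
Proof.
by move=> lt_in; rewrite -opprB -(natrB _ (ltnW lt_in)) oppr_eq0 natr_neq0 ?subn_gt0.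
Qed.

Lemma lie_rec_eq0 n i : (i < n)%N ->
  lie_rec n c0 g2 g3 A i = 0 <->
  A`_i = ((2 * i ^ 2 + 10 * i + 12)%N%:R * A`_(i + 3) * g3
          + (2 * i ^ 2 + 7 * i + 6)%N%:R * A`_(i + 2) * g2
          - 8%:R * c0 * A`_(i + 1)) * (i + 1)%N%:R
         / (4%:R * (i + n + 1)%N%:R * (2 * i + 1)%N%:R * (i%:R - n%:R)).
Proof.
move=> lt_in; apply: (eq0_iff_eq_div (c := 1)).
- exact: oner_neq0.
- by rewrite !mulf_neq0 ?natr_sub_neq0 ?natr_neq0 ?addn1.
- by rewrite /lie_rec !addn3 !addn2 !addn1; ring.
Qed.

Lemma lie_rec_top n : (0 < n)%N -> (size A <= n.+1)%N -> A`_n = 1 ->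
  lie_rec n c0 g2 g3 A n.-1 = 0 <-> A`_n.-1 = c0 / (2 * n - 1)%N%:R.
Proof.
case: n => // m _ /leq_sizeP A_gt An1 /=.
have -> : (2 * m.+1 - 1 = 2 * m + 1)%N by lia.
apply: (eq0_iff_eq_div (c := - (8 * m.+1)%N%:R)).
- by rewrite oppr_eq0 natr_neq0 ?muln_gt0.
- by rewrite natr_neq0 ?addn1.
- by rewrite /lie_rec An1 (A_gt m.+2) ?(A_gt m.+3) //; ring.
Qed.

Lemma lie_rec_subtop n : (1 < n)%N -> (size A <= n.+1)%N -> A`_n = 1 ->
  A`_n.-1 = c0 / (2 * n - 1)%N%:R ->
  lie_rec n c0 g2 g3 A n.-2 = 0 <->
  A`_n.-2 = (8%:R * c0 ^+ 2 - n%:R * g2 * ((2 * n - 1)%N%:R) ^+ 2) * (n.-1)%:R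
            / (8%:R * (2 * n - 3)%N%:R * ((2 * n - 1)%N%:R) ^+ 2).
Proof.
case: n => [|[|m]] // _ /leq_sizeP A_gt An1 /=.
have -> : (2 * m.+2 - 1 = 2 * m + 3)%N by lia.
have -> : (2 * m.+2 - 3 = 2 * m + 1)%N by lia.
have d_neq0 : (2 * m + 3)%N%:R != 0 :> R by rewrite natr_neq0 ?addn3.
move=> Am1; apply: (eq0_iff_eq_div (c := - ((2 * m + 3)%N%:R)^-1)).
- by rewrite oppr_eq0 invr_eq0.
- by rewrite !mulf_neq0 ?expf_neq0 //; rewrite natr_neq0 ?addn1.
rewrite /lie_rec An1 Am1 (A_gt m.+3) // !natrM.
have -> : (m + m.+2 + 1 = 2 * m + 3)%N by lia.
(* Abstracting 2m+3 leaves [field] with the side condition [d != 0]. *)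
move: (2 * m + 3)%N%:R d_neq0 => d d_neq0.
by field.
Qed.

End LieRecurrence.

Theorem theorem5 (R : fieldType) (charR0 : [pchar R] =i pred0)
  (n : nat) (hn : (1 <= n)%N) (c0 g2 g3 : R) (A : {poly R})
  (hsize : size A = n.+1) (hlead : lead_coef A = 1) :
  lie_poly n c0 g2 g3 A = 0 <->
  [/\ A`_(n.-1) = c0 / (2 * n - 1)%N%:R,
      (2 <= n)%N ->
        A`_(n.-2) = (8%:R * c0 ^+ 2 - n%:R * g2 * ((2 * n - 1)%N%:R) ^+ 2)
                    * (n.-1)%:R
                    / (8%:R * (2 * n - 3)%N%:R * ((2 * n - 1)%N%:R) ^+ 2)
    & forall i : nat, (i + 3 <= n)%N ->
        A`_i = ((2 * i ^ 2 + 10 * i + 12)%N%:R * A`_(i + 3) * g3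
                + (2 * i ^ 2 + 7 * i + 6)%N%:R * A`_(i + 2) * g2
                - 8%:R * c0 * A`_(i + 1)) * (i + 1)%N%:R
               / (4%:R * (i + n + 1)%N%:R * (2 * i + 1)%N%:R
                  * (i%:R - n%:R))].
Proof.
have two_neq0 : 2%:R != 0 :> R by rewrite natr_neq0.
have sizeA : (size A <= n.+1)%N by rewrite hsize.
have An1 : A`_n = 1 by rewrite -hlead lead_coefE hsize.
rewrite lie_poly_eq0 //; split=> [rec0 | [top subtop rec] k lt_kn].
- have top : A`_n.-1 = c0 / (2 * n - 1)%N%:R.
    by apply/(lie_rec_top charR0 hn sizeA An1)/rec0; lia.
  split=> // [n2 | i i3n].
    by apply/(lie_rec_subtop charR0 n2 sizeA An1 top)/rec0; lia.
  by apply/(lie_rec_eq0 charR0 (leq_trans _ i3n))/rec0; lia.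
- have [i3n | n_lt] := leqP (k + 3) n.
    by apply/(lie_rec_eq0 charR0 lt_kn)/rec.
  have : k = n.-1 \/ k = n.-2 /\ (1 < n)%N by lia.
  case=> [-> | [-> n2]]; first exact/(lie_rec_top charR0 hn sizeA An1).
  exact/(lie_rec_subtop charR0 n2 sizeA An1 top)/subtop.
Qed.
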